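(* Let $\Sigma$ be an Ehrhart fan of dimension $d$. Then the homogeneous degree-$d$ component of the polynomial $\widehat\chi_\Sigma$ equals $\frac{1}{d!}\widehat V_\Sigma$, where $\widehat\chi_\Sigma(z)=\chi_\Sigma([\sum_\rho z_\rho\delta_\rho])$ and $\widehat V_\Sigma(z)=\deg_\Sigma\big((\sum_{\rho}z_\rho x_\rho)^d\big)$ for $z\in\mathbb{Z}^{\Sigma(1)}$. That is, the leading term of the Ehrhart polynomial is $\frac1{d!}V_\Sigma$.
   Context: $N$ is a free abelian group, $N_\mathbb{R}=N\otimes\mathbb{R}$, $M=\mathrm{Hom}(N,\mathbb{Z})$ viewed as integral linear functions. A fan is unimodular if it contains the origin and for each cone the primitive ray generators $u_\rho\in N$ extend to a $\mathbb{Z}$-basis of $N$. $\mathrm{PL}(\Sigma)\cong\mathbb{Z}^{\Sigma(1)}$: functions on $|\Sigma|$ agreeing on each cone with some element of $M$; $\underline{\mathrm{PL}}(\Sigma)$ its quotient by restrictions of elements of $M$. Courant function $\delta_\rho$: $1$ at $u_\rho$, $0$ at other ray generators. Star fan $\Sigma^\sigma$: image in $N_\mathbb{R}/\mathrm{span}(\sigma)$ (lattice $N/\mathrm{Span}_\mathbb{Z}(\sigma\cap N)$) of all cones that are faces of cones containing $\sigma$; $[f]^\sigma$ is the class of the function induced by $f-m$, $m\in M$ agreeing with $f$ on $\sigma$. A unimodular fan $\Sigma$ is Ehrhart (recursively on dimension) if (1) $\Sigma^\rho$ is Ehrhart for every ray $\rho$, and (2) there is $\chi_\Sigma:\underline{\mathrm{PL}}(\Sigma)\to\mathbb{Z}$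 with $\chi_\Sigma(0)=1$ and $\chi_\Sigma([f])=\chi_\Sigma([f-\delta_\rho])+\chi_{\Sigma^\rho}([f]^\rho)$ for all $f,\rho$; such $\chi_\Sigma$ is unique and $\widehat\chi_\Sigma$ is a polynomial of degree $\dim\Sigma$ in $\mathbb{Q}[z_\rho]$. Let $\underline{\mathrm{PP}}^*(\Sigma)=\mathbb{Z}[x_\rho\mid\rho\in\Sigma(1)]/(\mathcal{J}_1+\mathcal{J}_2)$, where $\mathcal{J}_1$ is generated by the monomials $x_{\rho_1}\cdots x_{\rho_k}$ with $\rho_1,\dots,\rho_k$ not spanning a cone of $\Sigma$ and $\mathcal{J}_2$ by the linear forms $\sum_\rho m(u_\rho)x_\rho$, $m\in M$; it is graded by degree. An Ehrhart fan of dimension $d$ is balanced (for every $\tau\in\Sigma(d-1)$, $\sum_{\sigma\in\Sigma(d),\tau\subseteq\sigma}u_{\sigma(1)\setminus\tau(1)}\in\mathrm{span}(\tau)$), and for such a fan there is a unique $\mathbb{Z}$-linear map $\deg_\Sigma:\underline{\mathrm{PP}}^d(\Sigma)\to\mathbb{Z}$ with $\deg_\Sigma(x_{\rho_1}\cdots x_{\rho_d})=1$ whenever $\rho_1,\dots,\rho_d$ are the rays of a cone in $\Sigma(d)$. The volume polynomial is $V_\Sigma([f])=\deg_\Sigma([f]^d)$ with $[f]$ identified with the class of $\sum_\rho f(u_\rho)x_\rho$. *)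

From HB Require Import structures.
From mathcomp Require Import all_boot all_order all_algebra.
From mathcomp Require Import mpoly.
Set Implicit Arguments. Unset Strict Implicit. Unset Printing Implicit Defensive.
Import Order.TTheory GRing.Theory Num.Theory.
Local Open Scope ring_scope.

(* Lattice N = Z^n (row vectors 'rV[int]_n); M = Hom(N,Z) is identified with
   Z^n via the standard pairing.  The rays of the fan are indexed by 'I_r, with
   primitive generators u : 'I_r -> 'rV[int]_n; a cone is recorded by the set of
   its rays. *)

Definition pair_int (n : nat) (m u : 'rV[int]_n) : int := \sum_(k < n) m 0 k * u 0 k.

Definition in_cone (n r : nat) (u : 'I_r -> 'rV[int]_n) (S : {set 'I_r})
  (x : 'rV[rat]_n) : Prop :=
  exists lam : 'I_r -> rat, (forall i, 0 <= lam i) /\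
    x = \sum_(i in S) lam i *: map_mx (fun z : int => z%:~R) (u i).

Definition unimodular_fan (n r : nat) (u : 'I_r -> 'rV[int]_n)
  (cones : {set {set 'I_r}}) : Prop :=
  [/\ set0 \in cones,
      (forall i : 'I_r, [set i] \in cones),
      (forall S T : {set 'I_r}, S \in cones -> T \subset S -> T \in cones),
      (* unimodularity: the generators of each cone extend to a Z-basis of N *)
      (forall S, S \in cones -> exists B : 'M[int]_n, exists g : 'I_r -> 'I_n,
          B \in unitmx /\ {in S &, injective g} /\ (forall i, i \in S -> row (g i) B = u i))
    & (* fan condition: the intersection of two cones is a common face *)
      (forall S T, S \in cones -> T \in cones -> forall x,
          in_cone u S x -> in_cone u T x -> in_cone u (S :&: T) x)].

Definition fan_dim (r : nat) (cones : {set {set 'I_r}}) : nat :=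
  \max_(S in cones) #|S|.

Definition mres (n r : nat) (u : 'I_r -> 'rV[int]_n) (m : 'rV[int]_n) : 'I_r -> int :=
  fun i => pair_int m (u i).

(* Courant function delta_rho, as an element of PL(Sigma) = Z^{Sigma(1)} *)
Definition courant (r : nat) (j : 'I_r) : 'I_r -> int := fun i => (i == j)%:R.

(* rays of the star fan Sigma^sigma, for sigma a cone *)
Definition link (r : nat) (cones : {set {set 'I_r}}) (sigma : {set 'I_r}) : {set 'I_r} :=
  [set t | (t \notin sigma) && (t |: sigma \in cones)].

(* The star fan Sigma^sigma lives in N/Span(sigma), its rays are indexed by
   link sigma, PL(Sigma^sigma) = Z^{link sigma} (we use functions 'I_r -> int and
   ignore the values outside link sigma), and its dual lattice is
   {m in M | m vanishes on sigma}.  Iterated stars (Sigma^rho1)^rho2 ... are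
   canonically Sigma^{rho1,rho2,...}.  An Ehrhart fan is thus exactly one for
   which there is a family (chi_sigma)_{sigma in Sigma}, chi_sigma being the
   function chi_{Sigma^sigma} of the star fan, satisfying the defining
   conditions of chi at every iterated star. *)
Definition ehrhart_family (n r : nat) (u : 'I_r -> 'rV[int]_n)
  (cones : {set {set 'I_r}}) (chi : {set 'I_r} -> ('I_r -> int) -> int) : Prop :=
  forall sigma, sigma \in cones ->
  [/\ (* chi_sigma is a function on PL(Sigma^sigma) ... *)
      (forall f g : 'I_r -> int, (forall t, t \in link cones sigma -> f t = g t) ->
          chi sigma f = chi sigma g),
      (* ... which descends to the quotient by the dual lattice of N/Span(sigma) *)
      (forall (f : 'I_r -> int) (m : 'rV[int]_n),
          (forall i, i \in sigma -> pair_int m (u i) = 0) ->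
          chi sigma (f \+ mres u m) = chi sigma f),
      chi sigma (fun _ => 0) = 1
    & (* recursion chi([f]) = chi([f - delta_rho]) + chi_{Sigma^rho}([f]^rho) *)
      (forall t, t \in link cones sigma -> forall (f : 'I_r -> int) (m : 'rV[int]_n),
          (forall i, i \in sigma -> pair_int m (u i) = 0) -> pair_int m (u t) = f t ->
          chi sigma f = chi sigma (f \- courant t) + chi (t |: sigma) (f \- mres u m))].

Definition ehrhart_fan (n r : nat) (u : 'I_r -> 'rV[int]_n) (cones : {set {set 'I_r}}) : Prop :=
  unimodular_fan u cones /\ exists chi, ehrhart_family u cones chi.

(* Generators of the ideal J_1 + J_2 of Z[x_rho | rho in Sigma(1)] *)
Definition PP_gen (n r : nat) (u : 'I_r -> 'rV[int]_n) (cones : {set {set 'I_r}})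
  (h : {mpoly int[r]}) : Prop :=
  (exists a : 'X_{1..r}, h = 'X_[a] /\ [set i | (0 < a i)%N] \notin cones)
  \/ (exists m : 'rV[int]_n, h = \sum_(i < r) (pair_int m (u i))%:MP * 'X_i).

Definition PP_ideal (n r : nat) (u : 'I_r -> 'rV[int]_n) (cones : {set {set 'I_r}})
  (p : {mpoly int[r]}) : Prop :=
  exists s : seq ({mpoly int[r]} * {mpoly int[r]}),
    (forall x, x \in s -> PP_gen u cones x.2) /\ p = \sum_(x <- s) x.1 * x.2.

(* L induces a Z-linear map deg : PP^d(Sigma) -> Z normalized on Sigma(d):
   L is additive, kills the degree-d part of J_1 + J_2 (so only its restriction
   to the degree-d part modulo the ideal matters), and sends
   x_{rho_1}...x_{rho_d} to 1 for every d-dimensional cone. *)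
Definition is_deg_map (n r : nat) (u : 'I_r -> 'rV[int]_n) (cones : {set {set 'I_r}})
  (L : {mpoly int[r]} -> int) : Prop :=
  let d := fan_dim cones in
  [/\ (forall p q, L (p + q) = L p + L q),
      (forall p, p \is d.-homog -> PP_ideal u cones p -> L p = 0)
    & (forall S, S \in cones -> #|S| = d -> L (\prod_(i in S) 'X_i) = 1)].

Definition volume_poly_val (r : nat) (d : nat) (L : {mpoly int[r]} -> int)
  (z : 'I_r -> int) : int :=
  L ((\sum_(i < r) (z i)%:MP * 'X_i) ^+ d).

Definition homog_part (r : nat) (k : nat) (P : {mpoly rat[r]}) : {mpoly rat[r]} :=
  pihomog mdeg k P.

From HB Require Import structures.
From mathcomp Require Import all_boot all_order all_algebra.
From mathcomp Require Import mpoly.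
From mathcomp Require Import ring lra zify.
Set Implicit Arguments. Unset Strict Implicit. Unset Printing Implicit Defensive.
Import Order.TTheory GRing.Theory Num.Theory.
Local Open Scope ring_scope.

(* The recursion chi_S(f) = chi_S(f - delta_rho) + chi_{S+rho}([f]^rho) is a difference equation
   along the rho-th coordinate axis, so chi_S is obtained from the functions chi_{S+rho} of the star
   fans by summation.  A discrete antiderivative of a polynomial of degree D is a polynomial of
   degree D+1 whose top coefficient is divided by D+1; by induction on the codimension of S, chi_S
   is therefore a polynomial, and along a line k b + c with b vanishing on S the coefficient of
   k^(d-|S|) in chi_S(k b + c) is deg((sum_rho b_rho x_rho)^(d-|S|) x_S) / (d-|S|)!.  In the
   inductive step each ray rho of the link contributes b_rho times this coefficient for S+rho and
   the direction b - b_rho m_rho; the relations J_2 allow dropping the correction b_rho m_rho and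
   the relations J_1 kill the rays outside the link.  For S empty and c = 0 the coefficient is the
   degree-d homogeneous part of chi-hat evaluated at b. *)

(** * Discrete antiderivatives *)

Lemma shift_invariant_const (g : int -> rat) :
  (forall s, g s = g (s - 1)) -> forall N, g N = g 0.
Proof.
move=> gS; elim/int_rect => [//|k IH|k IH]; rewrite -IH.
  by rewrite gS; congr g; lia.
by rewrite [RHS]gS; congr g; lia.
Qed.

Definition backdiff (q : {poly rat}) := q - (q \Po ('X - 1%:P)).

Lemma backdiffD p q : backdiff (p + q) = backdiff p + backdiff q.
Proof. by rewrite /backdiff comp_polyD; ring. Qed.

Lemma backdiffZ (c : rat) (q : {poly rat}) : backdiff (c *: q) = c *: backdiff q.
Proof. by rewrite /backdiff comp_polyZ scalerBr. Qed.

Lemma horner_backdiff q x : (backdiff q).[x] = q.[x] - q.[x - 1].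
Proof. by rewrite /backdiff hornerD hornerN horner_comp hornerXsubC. Qed.

Lemma backdiff_Xn D : (size (backdiff 'X^D) <= D)%N /\ (backdiff 'X^D)`_D.-1 = D%:R.
Proof.
rewrite /backdiff comp_Xn_poly.
elim: D => [|D [/leq_sizeP IHs IHc]]; first by rewrite !expr0 subrr size_poly0 coef0.
have -> : 'X^(D.+1) - ('X - 1%:P) ^+ D.+1 =
    'X * ('X^D - ('X - 1%:P) ^+ D) + ('X - 1%:P) ^+ D :> {poly rat}.
  by rewrite !exprS; ring.
have sz := size_exp_XsubC D (1 : rat).
have lc : (('X - (1 : rat)%:P) ^+ D)`_D = 1.
  by rewrite -[RHS](monicP (monic_exp D (monicXsubC 1))) lead_coefE sz.
split.
  apply/leq_sizeP => -[//|j] hj; rewrite coefD coefXM /= IHs //.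
  by move/leq_sizeP: (leqnn (size (('X - (1 : rat)%:P) ^+ D))) => ->; rewrite ?addr0 // sz.
rewrite /= coefD coefXM lc.
case: D IHs IHc {sz lc} => [|D] _ /= IHc; first by rewrite add0r.
by rewrite IHc -!natr1.
Qed.

Lemma antidiff_exists D (h : {poly rat}) : (size h <= D)%N ->
  exists q : {poly rat}, [/\ (size q <= D.+1)%N, q`_D * D%:R = h`_D.-1 & backdiff q = h].
Proof.
elim: D h => [|D IH] h hs.
  move: hs; rewrite leqn0 size_poly_eq0 => /eqP ->.
  by exists 0; rewrite size_poly0 coef0 mul0r /backdiff comp_poly0 subrr.
pose q0 := (h`_D / D.+1%:R) *: 'X^(D.+1).
have [/leq_sizeP Ps Pc] := backdiff_Xn D.+1.
have D1_neq0 : D.+1%:R != 0 :> rat by rewrite pnatr_eq0.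
have sh : (size (h - backdiff q0)%R <= D)%N.
  apply/leq_sizeP => j; rewrite coefB backdiffZ coefZ leq_eqVlt => /orP [/eqP <-|hj].
    by rewrite Pc mulfVK // subrr.
  by move/leq_sizeP: hs => /(_ j hj) ->; rewrite Ps // mulr0 subrr.
have [q1 [/leq_sizeP s1 c1 d1]] := IH _ sh.
exists (q0 + q1); split.
- rewrite (leq_trans (size_polyD _ _)) // geq_max (leq_trans (size_scale_leq _ _)) ?size_polyXn //=.
  by apply/leq_sizeP => j hj; rewrite s1 // ltnW.
- by rewrite coefD coefZ coefXn eqxx mulr1 s1 // addr0 mulfVK.
- by rewrite backdiffD d1 addrC subrK.
Qed.

(** * Polynomial functions on integer points *)

Definition polyfun (D : nat) (lc : rat) (F : int -> rat) : Prop :=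
  exists p : {poly rat}, [/\ (size p <= D.+1)%N, p`_D = lc & forall k : int, p.[k%:~R] = F k].

Lemma polyfun_ext D lc F G : polyfun D lc F -> F =1 G -> polyfun D lc G.
Proof. by move=> [p [sp cp Fp]] FG; exists p; split=> // k; rewrite Fp FG. Qed.

Lemma polyfun0 D : polyfun D 0 (fun _ => 0).
Proof. by exists 0; rewrite size_poly0 coef0; split=> // k; rewrite horner0. Qed.

Lemma polyfunD D lc1 lc2 F1 F2 : polyfun D lc1 F1 -> polyfun D lc2 F2 ->
  polyfun D (lc1 + lc2) (fun k => F1 k + F2 k).
Proof.
move=> [p [sp cp Fp]] [q [sq cq Fq]]; exists (p + q); split.
- by rewrite (leq_trans (size_polyD _ _)) // geq_max sp sq.
- by rewrite coefD cp cq.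
- by move=> k; rewrite hornerD Fp Fq.
Qed.

Lemma polyfunN D lc F : polyfun D lc F -> polyfun D (- lc) (fun k => - F k).
Proof.
move=> [p [sp cp Fp]]; exists (- p); split; rewrite ?size_polyN ?coefN ?cp //.
by move=> k; rewrite hornerN Fp.
Qed.

Lemma polyfunB D lc1 lc2 F1 F2 : polyfun D lc1 F1 -> polyfun D lc2 F2 ->
  polyfun D (lc1 - lc2) (fun k => F1 k - F2 k).
Proof. by move=> P1 /polyfunN; apply: polyfunD. Qed.

Lemma polyfun_sum D (I : Type) (s : seq I) (lc : I -> rat) (F : I -> int -> rat) :
  (forall i, polyfun D (lc i) (F i)) ->
  polyfun D (\sum_(i <- s) lc i) (fun k => \sum_(i <- s) F i k).
Proof.
move=> PF; elim: s => [|i s IH].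
  by rewrite big_nil; apply: polyfun_ext (polyfun0 D) _ => k; rewrite big_nil.
by rewrite big_cons; apply: polyfun_ext (polyfunD (PF i) IH) _ => k; rewrite big_cons.
Qed.

Lemma polyfun_antidiff D lc F :
  polyfun D lc (fun k => F k - F (k - 1)) -> polyfun D.+1 (lc / D.+1%:R) F.
Proof.
move=> [h [sh ch Fh]].
have [q [sq cq dq]] := antidiff_exists sh.
exists (q + (F 0 - q.[0])%:P); split.
- by rewrite (leq_trans (size_polyD _ _)) // geq_max sq (leq_trans (size_polyC_leq1 _)).
- by rewrite coefD coefC addr0 -ch -cq mulfK // pnatr_eq0.
have qF_const : forall s, F s - q.[s%:~R] = F (s - 1) - q.[(s - 1)%:~R].
  move=> s; have := Fh s; rewrite -dq horner_backdiff intrB; lra.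
move=> k; have := shift_invariant_const qF_const k.
by rewrite hornerD hornerC; lra.
Qed.

Lemma polyfun_partial_sum D lc (G phi : int -> int -> rat) :
  (forall k s, G k s - G k (s - 1) = phi k s) ->
  (forall s, polyfun D lc (phi^~ s)) ->
  forall N : int, polyfun D (N%:~R * lc) (fun k => G k N - G k 0).
Proof.
move=> dG phiP; elim/int_rect => [|N IH|N IH].
- by rewrite mul0r; apply: polyfun_ext (polyfun0 D) _ => k; rewrite subrr.
- rewrite intS intrD mulrDl mul1r addrC.
  apply: polyfun_ext (polyfunD IH (phiP N.+1)) _ => k.
  by rewrite -(dG k N.+1) (_ : N.+1%:Z - 1 = N); [lra | lia].
- rewrite intS opprD intrD mulrDl mulN1r addrC.
  apply: polyfun_ext (polyfunB IH (phiP (- N%:Z))) _ => k.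
  by rewrite -(dG k (- N%:Z)) (_ : - N%:Z - 1 = -1 - N%:Z); [lra | lia].
Qed.

Lemma poly_int_roots (p : {poly rat}) : (forall k : int, p.[k%:~R] = 0) -> p = 0.
Proof.
move=> p0; apply/eqP; apply: contraT => /(@max_poly_roots _ _ [seq i%:R | i <- iota 0 (size p)]).
rewrite size_map size_iota ltnn; apply.
  by apply/allP => _ /mapP [i _ ->]; apply/rootP; have := p0 i.
by rewrite map_inj_uniq ?iota_uniq // => a b /eqP; rewrite eqr_nat => /eqP.
Qed.

Lemma homog_part_line r d (P : {mpoly rat[r]}) (z : 'I_r -> rat) :
  exists Q : {poly rat}, (forall x, Q.[x] = P.@[fun i => x * z i]) /\
    Q`_d = (homog_part d P).@[z].
Proof.
exists (\sum_(m <- msupp P) (P@_m * \prod_i z i ^+ m i) *: 'X^(mdeg m)); split.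
  move=> x; rewrite horner_sum mevalE; apply: eq_bigr => m _.
  rewrite hornerZ hornerXn mdegE -prodrXr -mulrA -big_split /=; congr (_ * _).
  by apply: eq_bigr => i _; rewrite exprMn mulrC.
rewrite coef_sum /homog_part /pihomog raddf_sum /= [RHS]big_mkcond /=.
apply: eq_bigr => m _; rewrite coefZ coefXn eq_sym.
by case: eqP => _; rewrite ?mulr1 ?mevalZ ?mevalX ?mulr0.
Qed.

Lemma coef_line_restriction r d (P : {mpoly rat[r]}) (z : 'I_r -> int) (p : {poly rat}) :
  (forall k : int, p.[k%:~R] = P.@[fun i => (k * z i)%:~R]) ->
  p`_d = (homog_part d P).@[fun i => (z i)%:~R].
Proof.
move=> pP; have [Q [QP <-]] := homog_part_line d P (fun i => (z i)%:~R).
suff -> : p = Q by [].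
apply/eqP; rewrite -subr_eq0; apply/eqP/poly_int_roots => k.
rewrite hornerD hornerN QP pP; apply/eqP; rewrite subr_eq0; apply/eqP.
by apply: meval_eq => i; rewrite intrM.
Qed.

Definition mpolyfun (r : nat) (F : ('I_r -> int) -> rat) : Prop :=
  exists P : {mpoly rat[r]}, forall z, P.@[fun i => (z i)%:~R] = F z.

Section PolynomialFunctions.
Variable r : nat.
Implicit Types F G : ('I_r -> int) -> rat.

Lemma mpolyfun_ext F G : mpolyfun F -> F =1 G -> mpolyfun G.
Proof. by move=> [P FP] FG; exists P => z; rewrite FP FG. Qed.

Lemma mpolyfun_meval (Q : {mpoly rat[r]}) : mpolyfun (fun z => Q.@[fun i => (z i)%:~R]).
Proof. by exists Q. Qed.

Lemma mpolyfun_cst (c : rat) : mpolyfun (fun _ : 'I_r -> int => c).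
Proof. by exists c%:MP => z; rewrite mevalC. Qed.

Lemma mpolyfunD F G : mpolyfun F -> mpolyfun G -> mpolyfun (fun z => F z + G z).
Proof. by move=> [P FP] [Q GQ]; exists (P + Q) => z; rewrite mevalD FP GQ. Qed.

Lemma mpolyfunB F G : mpolyfun F -> mpolyfun G -> mpolyfun (fun z => F z - G z).
Proof. by move=> [P FP] [Q GQ]; exists (P - Q) => z; rewrite mevalB FP GQ. Qed.

Lemma mpolyfun_sum (I : Type) (s : seq I) (F : I -> ('I_r -> int) -> rat) :
  (forall i, mpolyfun (F i)) -> mpolyfun (fun z => \sum_(i <- s) F i z).
Proof.
move=> PF; elim: s => [|i s IH].
  by apply: mpolyfun_ext (mpolyfun_cst 0) _ => z; rewrite big_nil.
by apply: mpolyfun_ext (mpolyfunD (PF i) IH) _ => z; rewrite big_cons.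
Qed.

Lemma mpolyfun_comp_lin F (A : 'I_r -> 'I_r -> int) :
  mpolyfun F -> mpolyfun (fun z => F (fun i => \sum_k A i k * z k)).
Proof.
move=> [P FP]; exists (P \mPo [tuple \sum_k ((A i k)%:~R)%:MP * 'X_k | i < r]) => z.
rewrite comp_mpoly_meval -FP; apply: meval_eq => i.
rewrite tnth_mktuple raddf_sum rmorph_sum /=; apply: eq_bigr => k _.
by rewrite mevalM mevalC mevalXU intrM.
Qed.

Lemma mpoly_antidiff_monomial (m : 'X_{1..r}) (j : 'I_r) :
  exists Q : {mpoly rat[r]}, forall v : 'I_r -> rat,
    Q.@[v] - Q.@[fun i => v i - (i == j)%:R] = ('X_[m] : {mpoly rat[r]}).@[v].
Proof.
have szX : (size ('X^(m j) : {poly rat}) <= (m j).+1)%N by rewrite size_polyXn.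
have [q [_ _ dq]] := antidiff_exists szX.
pose Xj := \sum_(t < size q) (q`_t)%:MP * 'X_j ^+ t : {mpoly rat[r]}.
have XjE w : Xj.@[w] = q.[w j].
  rewrite horner_coef raddf_sum /=; apply: eq_bigr => t _.
  by rewrite mevalM mevalC rmorphXn /= mevalXU.
exists ((\prod_(i | i != j) 'X_i ^+ m i) * Xj) => v.
have other_vars : \prod_(i | i != j) ('X_i ^+ m i).@[fun i0 => v i0 - (i0 == j)%:R] =
                  \prod_(i | i != j) ('X_i ^+ m i : {mpoly rat[r]}).@[v].
  by apply: eq_bigr => i /negPf ij; rewrite !rmorphXn /= !mevalXU ij subr0.
rewrite !mevalM !rmorph_prod !XjE /= eqxx other_vars -mulrBr -horner_backdiff dq.
rewrite hornerXn mevalX [RHS](bigD1 j) //= mulrC.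
by congr (_ * _); apply: eq_bigr => i _; rewrite rmorphXn /= mevalXU.
Qed.

Lemma mpoly_antidiff (P : {mpoly rat[r]}) (j : 'I_r) :
  exists Q : {mpoly rat[r]}, forall v : 'I_r -> rat,
    Q.@[v] - Q.@[fun i => v i - (i == j)%:R] = P.@[v].
Proof.
rewrite [P]mpolyE; elim: (msupp P) => [|m s [Q HQ]].
  by exists 0 => v; rewrite big_nil !meval0 subrr.
have [Qm HQm] := mpoly_antidiff_monomial m j.
exists (P@_m *: Qm + Q) => v.
by rewrite big_cons !mevalD !mevalZ -HQ -HQm; ring.
Qed.

End PolynomialFunctions.

Lemma sum_delta r (w : 'I_r -> int) (i : 'I_r) : \sum_k (i == k)%:R * w k = w i.
Proof.
rewrite (bigD1 i) //= eqxx mul1r big1 ?addr0 // => k /negPf.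
by rewrite eq_sym => ->; rewrite mul0r.
Qed.

Definition splice r (j : nat) (f g : 'I_r -> int) : 'I_r -> int :=
  fun i => if (i < j)%N then g i else f i.

Lemma splice_succ r (j : 'I_r) f g i :
  splice j.+1 f g i = splice j f g i + (g j - f j) * (i == j)%:R.
Proof.
rewrite /splice ltnS leq_eqVlt; case: (eqVneq i j) => [->|ij] /=.
  by rewrite eqxx ltnn mulr1 addrC subrK.
by move: ij; rewrite -(inj_eq val_inj) => /negPf ->; rewrite mulr0 addr0.
Qed.

Definition line r (b c : 'I_r -> int) (k : int) : 'I_r -> int := fun i => k * b i + c i.

Lemma mpolyfun_meval_splice r (Q : {mpoly rat[r]}) (j : nat) :
  mpolyfun (fun z => Q.@[fun i => (splice j (fun _ => 0) z i)%:~R]).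
Proof.
have := mpolyfun_comp_lin (fun i k => ((i == k) && (i < j)%N)%:R) (mpolyfun_meval Q).
move/mpolyfun_ext; apply=> z.
apply: meval_eq => i; rewrite /splice; case: ifP => ij.
  by rewrite -(sum_delta z i); congr (_%:~R); apply: eq_bigr => k _; rewrite andbT.
by rewrite big1 // => k _; rewrite andbF mul0r.
Qed.

Definition linear_form r (b : 'I_r -> int) : {mpoly int[r]} := \sum_i (b i)%:MP * 'X_i.

Definition cone_monomial r (S : {set 'I_r}) : {mpoly int[r]} := \prod_(i in S) 'X_i.

Lemma mpolyX_homog r (i : 'I_r) : ('X_i : {mpoly int[r]}) \is 1.-homog.
Proof. by apply/dhomogP => m; rewrite msuppX inE => /eqP ->; exact: mdeg1. Qed.

Lemma linear_form_homog r (b : 'I_r -> int) : linear_form b \is 1.-homog.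
Proof. by apply: rpred_sum => i _; rewrite mul_mpolyC dhomogZ ?mpolyX_homog. Qed.

Lemma cone_monomialE r (S : {set 'I_r}) : cone_monomial S = 'X_[\sum_(i in S) U_(i)].
Proof. by rewrite /cone_monomial mprodXE. Qed.

Lemma cone_monomial_homog r (S : {set 'I_r}) : cone_monomial S \is #|S|.-homog.
Proof.
have degS : mdeg (\sum_(i in S) U_(i))%MM = #|S|.
  by rewrite mdeg_sum (eq_bigr (fun _ => 1%N)) ?sum1_card // => i _; rewrite mdeg1.
by rewrite cone_monomialE; apply/dhomogP => m; rewrite msuppX inE => /eqP ->; exact: degS.
Qed.

Lemma cone_monomialU1 r (S : {set 'I_r}) j :
  j \notin S -> cone_monomial (j |: S) = 'X_j * cone_monomial S.
Proof. by move=> jS; rewrite /cone_monomial big_setU1. Qed.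

Lemma pair_intZ n (a : int) (m v : 'rV[int]_n) : pair_int (a *: m) v = a * pair_int m v.
Proof. by rewrite /pair_int big_distrr; apply: eq_bigr => k _; rewrite !mxE /= mulrA. Qed.

(** * Ehrhart fans *)

Section EhrhartFan.
Variables (n r : nat) (u : 'I_r -> 'rV[int]_n) (cones : {set {set 'I_r}}).
Variables (chi : {set 'I_r} -> ('I_r -> int) -> int) (L : {mpoly int[r]} -> int).
Hypothesis fanU : unimodular_fan u cones.
Hypothesis chiE : ehrhart_family u cones chi.
Hypothesis degL : is_deg_map u cones L.

Local Notation d := (fan_dim cones).

Lemma cone_card_le S : S \in cones -> (#|S| <= d)%N.
Proof. by move=> HS; rewrite /fan_dim (leq_bigmax_cond _ HS). Qed.

Lemma link_cone S t : t \in link cones S -> t \notin S /\ t |: S \in cones.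
Proof. by rewrite inE => /andP. Qed.

Lemma link_card S t : t \in link cones S -> #|t |: S| = #|S|.+1 /\ (#|S| < d)%N.
Proof.
move=> /link_cone [tS tSc]; have cardU : #|t |: S| = #|S|.+1 by rewrite cardsU1 tS.
by rewrite -cardU cone_card_le.
Qed.

Lemma chi_ext S f g : S \in cones -> {in link cones S, f =1 g} -> chi S f = chi S g.
Proof. by move=> HS; case: (chiE HS) => ext _ _ _; apply: ext. Qed.

Lemma chi_zero S : S \in cones -> chi S (fun _ => 0) = 1.
Proof. by move=> HS; case: (chiE HS). Qed.

(* The columns of the inverse of a unimodular basis extending the rays of S give the dual basis. *)
Lemma cone_dual_basis S j : S \in cones -> j \in S ->
  exists m, forall i, i \in S -> pair_int m (u i) = (i == j)%:R.
Proof.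
move=> HS jS; have [_ _ _ basis _] := fanU.
have [B [g [unitB [g_inj rowB]]]] := basis S HS.
exists (\row_k (invmx B) k (g j)) => i iS.
have := congr1 (fun M : 'M[int]_n => M (g i) (g j)) (mulmxV unitB).
rewrite !mxE /pair_int (inj_in_eq g_inj) // => <-.
by apply: eq_bigr => k _; rewrite -(rowB i iS) !mxE mulrC.
Qed.

Lemma link_dual S j : S \in cones -> j \in link cones S ->
  exists m, (forall i, i \in S -> pair_int m (u i) = 0) /\ pair_int m (u j) = 1.
Proof.
move=> HS /link_cone [jS jSc]; have [m mE] := cone_dual_basis jSc (setU11 j S).
exists m; split; last by rewrite mE ?setU11 ?eqxx.
move=> i iS; rewrite mE ?setU1r //.
by case: eqP iS => // ->; rewrite (negPf jS).
Qed.

Lemma chi_shift S j m (w : 'I_r -> int) (s : int) : S \in cones -> j \in link cones S ->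
  (forall i, i \in S -> pair_int m (u i) = 0) -> pair_int m (u j) = 1 ->
  chi S (fun i => w i + s * (i == j)%:R) =
    chi S (fun i => w i + (s - 1) * (i == j)%:R) +
    chi (j |: S) (fun i => w i + s * (i == j)%:R - (w j + s) * pair_int m (u i)).
Proof.
move=> HS Hj m0 m1; case: (chiE HS) => _ _ _ /(_ j Hj) rec.
have [_ jSc] := link_cone Hj.
rewrite (rec _ ((w j + s) *: m)); first last.
- by rewrite pair_intZ m1 eqxx mulr1 mulr1.
- by move=> i iS; rewrite pair_intZ m0 ?mulr0.
congr (_ + _).
  by apply: chi_ext => // t _; rewrite /courant /=; ring.
by apply: chi_ext => // t _; rewrite /mres /= pair_intZ.
Qed.

Lemma chi_telescope S f g : S \in cones ->
  (chi S g)%:~R - (chi S f)%:~R =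
  \sum_(j < r) ((chi S (splice j.+1 f g))%:~R - (chi S (splice j f g))%:~R) :> rat.
Proof.
move=> HS.
rewrite -(big_mkord xpredT (fun j => (chi S (splice j.+1 f g))%:~R - (chi S (splice j f g))%:~R)).
rewrite telescope_sumr //.
by congr (_%:~R - _%:~R); apply: chi_ext => // t _; rewrite /splice ltn_ord.
Qed.

Lemma chi_splice_nonlink S f g (j : 'I_r) : S \in cones -> j \notin link cones S ->
  chi S (splice j.+1 f g) = chi S (splice j f g).
Proof.
move=> HS Hj; apply: chi_ext => // t Ht; rewrite splice_succ.
by case: eqP Ht Hj => [-> -> //|_ _ _]; rewrite mulr0 addr0.
Qed.

Lemma chi_sub_antidiff_invariant S j m (Q : {mpoly rat[r]}) :
    S \in cones -> j \in link cones S ->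
    (forall i, i \in S -> pair_int m (u i) = 0) -> pair_int m (u j) = 1 ->
    (forall w : 'I_r -> int, Q.@[fun i => (w i)%:~R] - Q.@[fun i => (w i)%:~R - (i == j)%:R] =
       (chi (j |: S) (fun i => w i - w j * pair_int m (u i)))%:~R) ->
  forall (w : 'I_r -> int) (N : int),
    (chi S (fun i => w i + N * (i == j)%:R))%:~R - Q.@[fun i => (w i + N * (i == j)%:R)%:~R] =
    (chi S w)%:~R - Q.@[fun i => (w i)%:~R].
Proof.
move=> HS Hj m0 m1 QE w N.
pose g s := (chi S (fun i => w i + s * (i == j)%:R))%:~R -
            Q.@[fun i => (w i + s * (i == j)%:R)%:~R] : rat.
have gS s : g s = g (s - 1).
  have Qs : Q.@[fun i => (w i + s * (i == j)%:R)%:~R - (i == j)%:R] =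
            Q.@[fun i => (w i + (s - 1) * (i == j)%:R)%:~R].
    by apply: meval_eq => i /=; ring.
  have := QE (fun i => w i + s * (i == j)%:R).
  rewrite /= Qs /g (chi_shift _ _ HS Hj m0 m1) rmorphD /= eqxx mulr1 => QS.
  by rewrite -QS; ring.
have := shift_invariant_const gS N; rewrite /g => ->.
rewrite (chi_ext (g := w) HS); last by move=> t _; ring.
by congr (_ - _); apply: meval_eq => i; rewrite mul0r addr0.
Qed.

Lemma mpolyfun_chi_splice S j : S \in cones -> j \in link cones S ->
  mpolyfun (fun z => (chi (j |: S) z)%:~R) ->
  mpolyfun (fun z => (chi S (splice j.+1 (fun _ => 0) z))%:~R -
                     (chi S (splice j (fun _ => 0) z))%:~R).
Proof.
move=> HS Hj chiP; have [m [m0 m1]] := link_dual HS Hj; have [_ jSc] := link_cone Hj.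
have [P PE] : mpolyfun (fun w => (chi (j |: S) (fun i => w i - w j * pair_int m (u i)))%:~R).
  have := mpolyfun_comp_lin (fun i k => (i == k)%:R - pair_int m (u i) * (j == k)%:R) chiP.
  move/mpolyfun_ext; apply => w; congr (_%:~R); apply: chi_ext => // t _.
  rewrite -(sum_delta w t) -(sum_delta w j) mulr_suml -sumrB.
  by apply: eq_bigr => k _; ring.
have [Q QE] := mpoly_antidiff P j.
have chiQ := chi_sub_antidiff_invariant HS Hj m0 m1 (fun w => etrans (QE _) (PE w)).
have := mpolyfunB (mpolyfun_meval_splice Q j.+1) (mpolyfun_meval_splice Q j).
move/mpolyfun_ext; apply=> z; have := chiQ (splice j (fun _ => 0) z) (z j).
have spliceS i : splice j.+1 (fun _ => 0) z i = splice j (fun _ => 0) z i + z j * (i == j)%:R.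
  by rewrite splice_succ subr0.
rewrite -(chi_ext (f := splice j.+1 (fun _ => 0) z) HS); last by move=> t _; rewrite spliceS.
rewrite -(meval_eq _ (v1 := fun i => (splice j.+1 (fun _ => 0) z i)%:~R)) => [E|i].
  by lra.
by rewrite spliceS.
Qed.

Lemma mpolyfun_chi_step S : S \in cones ->
  (forall j, j \in link cones S -> mpolyfun (fun z => (chi (j |: S) z)%:~R)) ->
  mpolyfun (fun z => (chi S z)%:~R).
Proof.
move=> HS IH.
have chi_sum z : (chi S z)%:~R = 1 + \sum_(j < r)
    ((chi S (splice j.+1 (fun _ => 0) z))%:~R - (chi S (splice j (fun _ => 0) z))%:~R) :> rat.
  by rewrite -chi_telescope // chi_zero // addrC subrK.
apply: mpolyfun_ext (mpolyfunD (mpolyfun_cst _ 1) _) (fun z => esym (chi_sum z)).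
apply: mpolyfun_sum => j; have [Hj|Hj] := boolP (j \in link cones S).
  exact: mpolyfun_chi_splice HS Hj (IH j Hj).
by apply: mpolyfun_ext (mpolyfun_cst _ 0) _ => z; rewrite chi_splice_nonlink // subrr.
Qed.

Lemma mpolyfun_chi S : S \in cones -> mpolyfun (fun z => (chi S z)%:~R).
Proof.
move: {2}(d - #|S|)%N (leqnn (d - #|S|)) => e; elim: e S => [|e IH] S le_e HS;
  apply: mpolyfun_chi_step => // j Hj; have [cardU lt_d] := link_card Hj.
  by move: le_e lt_d; lia.
by apply: IH; [rewrite cardU; lia | case: (link_cone Hj)].
Qed.

Lemma degD p q : L (p + q) = L p + L q.
Proof. by case: degL. Qed.

Lemma deg0 : L 0 = 0.
Proof. by apply: (addrI (L 0)); rewrite -degD !addr0. Qed.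

HB.instance Definition _ := GRing.isNmodMorphism.Build _ _ L (deg0, degD).

Lemma degZ (c : int) p : L (c%:MP * p) = c * L p.
Proof.
rewrite mul_mpolyC (_ : c *: p = p *~ c); last by rewrite -scaler_int intz.
by rewrite raddfMz -mulrzl intz.
Qed.

Lemma deg_cone S : S \in cones -> #|S| = d -> L (cone_monomial S) = 1.
Proof. by case: degL => _ _; apply. Qed.

Lemma deg_nonface (S : {set 'I_r}) (j : 'I_r) (b : 'I_r -> int) D :
  j \notin S -> j |: S \notin cones -> (D + #|S|.+1 = d)%N ->
  L (linear_form b ^+ D * ('X_j * cone_monomial S)) = 0.
Proof.
move=> jS jSc HD; case: degL => _ degJ _; apply: degJ.
  have -> : d = (1 * D + (1 + #|S|))%N by lia.
  apply: dhomogM (dhomogMn _ (linear_form_homog b)) _.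
  exact: dhomogM (mpolyX_homog j) (cone_monomial_homog S).
pose e := (U_(j) + \sum_(i in S) U_(i))%MM.
have Xe : 'X_j * cone_monomial S = 'X_[e] by rewrite cone_monomialE -mpolyXD.
pose q := linear_form b ^+ D.
exists [seq ((q@_m)%:MP, ('X_[(m + e)%MM] : {mpoly int[r]})) | m <- msupp q]; split.
  move=> x /mapP [m _ ->] /=; left; exists (m + e)%MM; split => //.
  apply: contra jSc => supp_cone; case: fanU => _ _ faces _ _; apply: faces supp_cone _.
  apply/subsetP => i; rewrite !inE !mnmDE mnm_sumE => /orP [/eqP ->|iS].
    by rewrite mnm1E eqxx; lia.
  by rewrite (bigD1 i iS) /= [U_(i)%MM i]mnm1E eqxx; lia.
rewrite big_map Xe -/q {1}[q]mpolyE mulr_suml; apply: eq_bigr => m _.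
by rewrite mpolyXD mul_mpolyC scalerAl.
Qed.

Lemma deg_shift (S : {set 'I_r}) (j : 'I_r) (b : 'I_r -> int) m D : (D + #|S|.+1 = d)%N ->
  L (linear_form (fun i => b i - b j * pair_int m (u i)) ^+ D * ('X_j * cone_monomial S)) =
  L (linear_form b ^+ D * ('X_j * cone_monomial S)).
Proof.
move=> HD; pose J := linear_form (mres u m).
have lfE : linear_form (fun i => b i - b j * pair_int m (u i)) = linear_form b - (b j)%:MP * J.
  rewrite /linear_form /J mulr_sumr -sumrB; apply: eq_bigr => i _.
  by rewrite rmorphB rmorphM /= mulrBl mulrA.
set y := 'X_j * cone_monomial S.
have y_homog : y \is (1 + #|S|).-homog := dhomogM (mpolyX_homog j) (cone_monomial_homog S).
apply/eqP; rewrite -subr_eq0 -raddfB; apply/eqP.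
case: degL => _ degJ _; apply: degJ.
  have -> : d = (1 * D + (1 + #|S|))%N by lia.
  apply: rpredB; apply: dhomogM y_homog; apply: dhomogMn; last exact: linear_form_homog.
  by rewrite lfE rpredB ?linear_form_homog // mul_mpolyC dhomogZ ?linear_form_homog.
(* x^D - y^D = (x - y) * \sum_i x^(D-1-i) y^i with x - y = - b_j J, a multiple of J. *)
exists [:: (- (b j)%:MP * (\sum_(i < D) (linear_form b - (b j)%:MP * J) ^+ (D.-1 - i)
                                       * linear_form b ^+ i) * y, J)]; split.
  by move=> x; rewrite inE => /eqP -> /=; right; exists m.
by rewrite big_seq1 /= -mulrBl subrXX lfE; ring.
Qed.

Lemma deg_expand (S : {set 'I_r}) (b : 'I_r -> int) D :
  S \in cones -> (D.+1 + #|S| = d)%N ->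
  (forall i, i \in S -> b i = 0) ->
  \sum_(j < r) (if j \in link cones S
                then b j * L (linear_form b ^+ D * ('X_j * cone_monomial S)) else 0) =
  L (linear_form b ^+ D.+1 * cone_monomial S).
Proof.
move=> HS HD b0.
have -> : linear_form b ^+ D.+1 * cone_monomial S =
    \sum_j (b j)%:MP * (linear_form b ^+ D * ('X_j * cone_monomial S)).
  by rewrite exprS {1}/linear_form !mulr_suml; apply: eq_bigr => j _; ring.
rewrite raddf_sum /=; apply: eq_bigr => j _; rewrite degZ; case: ifP => // Hj.
have [jS|jS] := boolP (j \in S); first by rewrite b0 // mul0r.
rewrite deg_nonface ?mulr0 //; last by lia.
by apply: contraFN Hj => jSc; rewrite inE jS jSc.
Qed.

Definition mixed_degree (S : {set 'I_r}) (b : 'I_r -> int) :=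
  L (linear_form b ^+ (d - #|S|) * cone_monomial S).

Definition chi_line_lead (S : {set 'I_r}) :=
  forall b c : 'I_r -> int, (forall i, i \in S -> b i = 0) ->
  polyfun (d - #|S|) ((mixed_degree S b)%:~R / ((d - #|S|)`!)%:R)
          (fun k => (chi S (line b c k))%:~R).

Lemma chi_line_lead_maximal S : S \in cones -> #|S| = d -> chi_line_lead S.
Proof.
move=> HS cardS b c _; rewrite /mixed_degree cardS subnn expr0 mul1r fact0 divr1.
rewrite deg_cone //; exists 1; split; rewrite ?size_polyC_leq1 ?coefC //.
move=> k; rewrite hornerC (chi_ext (g := fun _ => 0)) ?chi_zero //.
by move=> t /link_card [_]; rewrite cardS ltnn.
Qed.

(* Moving the j-th coordinate from line b c (k - 1) to line b c k sums b_j terms of the recursion,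
   each of which is chi_{j+S} on a line of direction b - b_j m, which vanishes on j+S. *)
Lemma chi_line_link_term S (j : 'I_r) D b c : S \in cones -> (d - #|S| = D.+1)%N ->
  j \in link cones S -> chi_line_lead (j |: S) -> (forall i, i \in S -> b i = 0) ->
  polyfun D ((b j * L (linear_form b ^+ D * ('X_j * cone_monomial S)))%:~R / (D`!)%:R)
    (fun k => (chi S (splice j.+1 (line b c (k - 1)) (line b c k)))%:~R -
              (chi S (splice j (line b c (k - 1)) (line b c k)))%:~R).
Proof.
move=> HS HD Hj IH b0.
have [m [m0 m1]] := link_dual HS Hj.
have [cardU _] := link_card Hj; have [jS _] := link_cone Hj.
have eD : (d - #|j |: S| = D)%N by rewrite cardU; lia.
pose b' i := b i - b j * pair_int m (u i).
pose c' s i := - b i + c i + (if (i < j)%N then b i else 0) + s * (i == j)%:R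
               - (- b j + c j + s) * pair_int m (u i).
pose G k s :=
  (chi S (fun i => splice j (line b c (k - 1)) (line b c k) i + s * (i == j)%:R))%:~R : rat.
have dG k s : G k s - G k (s - 1) = (chi (j |: S) (fun i => k * b' i + c' s i))%:~R.
  rewrite /G (chi_shift _ _ HS Hj m0 m1) rmorphD /= addrAC subrr add0r.
  congr (_%:~R); apply: chi_ext => [|t _]; first by case: (link_cone Hj).
  by rewrite /splice /b' /c' /line ltnn; case: ifP => _; ring.
have b'0 i : i \in j |: S -> b' i = 0.
  rewrite in_setU1 /b' => /orP [/eqP ->|iS]; first by rewrite m1 mulr1 subrr.
  by rewrite m0 // b0 // mulr0 subrr.
have := polyfun_partial_sum dG (fun s => IH b' (c' s) b'0) (b j).
rewrite /mixed_degree eD cone_monomialU1 // deg_shift; last by lia.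
rewrite mulrA -intrM; move/polyfun_ext; apply => k.
rewrite /G; congr (_%:~R - _%:~R); apply: chi_ext => // t _; last by rewrite mul0r addr0.
by rewrite splice_succ /line; congr (_ + _ * _); ring.
Qed.

Lemma chi_line_lead_step S D : S \in cones -> (d - #|S| = D.+1)%N ->
  (forall j, j \in link cones S -> chi_line_lead (j |: S)) -> chi_line_lead S.
Proof.
move=> HS HD IH b c b0; rewrite HD.
pose lc j := (if j \in link cones S
              then b j * L (linear_form b ^+ D * ('X_j * cone_monomial S)) else 0)%:~R
             / (D`!)%:R : rat.
have lcE : (mixed_degree S b)%:~R / ((D.+1)`!)%:R = (\sum_(j < r) lc j) / D.+1%:R.
  rewrite -mulr_suml -rmorph_sum /= deg_expand //; last by lia.
  by rewrite /mixed_degree HD factS natrM invfM mulrA mulrAC.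
rewrite lcE; apply: polyfun_antidiff.
have termP j : polyfun D (lc j) (fun k =>
    (chi S (splice j.+1 (line b c (k - 1)) (line b c k)))%:~R -
    (chi S (splice j (line b c (k - 1)) (line b c k)))%:~R).
  rewrite /lc; case: ifP => Hj; first exact: chi_line_link_term HS HD Hj (IH j Hj) b0.
  rewrite mul0r; apply: polyfun_ext (polyfun0 D) _ => k.
  by rewrite chi_splice_nonlink ?Hj // subrr.
have := polyfun_sum (index_enum 'I_r) termP.
by move/polyfun_ext; apply=> k; rewrite -chi_telescope.
Qed.

Lemma chi_line_lead_cone S : S \in cones -> chi_line_lead S.
Proof.
move: {2}(d - #|S|)%N (erefl (d - #|S|)%N) => e; elim: e S => [|e IH] S codim HS.
  by apply: chi_line_lead_maximal => //; move: (cone_card_le HS) codim; lia.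
apply: (chi_line_lead_step HS codim) => j Hj; have [cardU _] := link_card Hj.
by apply: IH; [rewrite cardU; lia | case: (link_cone Hj)].
Qed.

End EhrhartFan.

Theorem proposition3 (n r : nat) (u : 'I_r -> 'rV[int]_n)
    (cones : {set {set 'I_r}})
    (chi : {set 'I_r} -> ('I_r -> int) -> int)
    (L : {mpoly int[r]} -> int) :
  unimodular_fan u cones ->
  ehrhart_family u cones chi ->
  is_deg_map u cones L ->
  exists P : {mpoly rat[r]},
    (forall z : 'I_r -> int,
        P.@[fun i => (z i)%:~R] =
        (chi set0 (fun j => \sum_(i < r) z i * courant i j))%:~R)
    /\ (forall z : 'I_r -> int,
        (homog_part (fan_dim cones) P).@[fun i => (z i)%:~R] =
        (volume_poly_val (fan_dim cones) L z)%:~R / ((fan_dim cones)`!)%:R).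
Proof.
move=> fanU chiE degL; have cone0 : set0 \in cones by case: fanU.
have [P PE] := mpolyfun_chi fanU chiE cone0.
exists P; split=> z.
  rewrite PE; congr (_%:~R); apply: (chi_ext chiE cone0) => t _.
  by rewrite -(sum_delta z t); apply: eq_bigr => i _; rewrite /courant mulrC eq_sym.
have z0 i : i \in set0 -> z i = 0 by rewrite in_set0.
have [p [_ lc_p pE]] := chi_line_lead_cone fanU chiE degL cone0 (b := z) (fun _ => 0) z0.
have pline k : p.[k%:~R] = P.@[fun i => (k * z i)%:~R].
  by rewrite pE PE; congr (_%:~R); apply: (chi_ext chiE cone0) => t _; rewrite /line addr0.
rewrite -(coef_line_restriction _ pline); move: lc_p; rewrite cards0 subn0 => ->.
by rewrite /mixed_degree cards0 subn0 /cone_monomial big_set0 mulr1.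
Qed.
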